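(* Suppose the nearest neighbor algorithm (NNA) terminates normally and outputs the route $\mathcal{M}_2=(1,m_2^*,\dots,m_{L_2}^* )$ with $m_{L_2}^*=D$. Let $\mathcal{M}_1=(1,m_2,\dots,m_{L_1})$ with $m_{L_1}=D$ be any route from the source to the destination, where $L_1$ need not equal $L_2$. Then $R_{\mathrm{DF}}(\mathcal{M}_2)\ge R_{\mathrm{DF}}(\mathcal{M}_1)$.
   Context: Network: a finite set of nodes $\mathcal{S}=\{1,2,\dots,D\}$, $D\ge 2$. Node $1$ is the source and node $D$ is the destination. Received powers: for distinct nodes $i,t$, the power received at $t$ from $i$ is a positive real number $P_{it}$. All receivers have the same noise power $N>0$. Routes: a route is an ordered tuple of distinct nodes $\mathcal{M}=(m_1,\dots,m_L)$ with $m_1=1$ and $L\ge1$. It is a route from the source to the destination if moreover $m_L=D$. For $a\notin\mathcal{M}$, $\mathcal{M}\cup\{a\}$ denotes $(m_1,\dots,m_L,a)$. DF with independent codewords: the reception rate of node $m_t$ ($2\le t\le L$) in route $\mathcal{M}$ is $$R_{m_t}(\mathcal{M})=\tfrac12\log\Big(1+N^{-1}\sum_{i=1}^{t-1}P_{m_i m_t}\Big).$$ The supported DF rate (for $L\ge2$) is $R_{\mathrm{DF}}(\mathcal{M})=\min_{2\le t\le L}R_{m_t}(\mathcal{M})$. Nearest neighbor: node $i\notin\mathcal{M}$ is a nearest neighbor with respect to route $\mathcal{M}$ iff $P_{mi}\ge P_{mj}$ for all $m\in\mathcal{M}$ and all $j\in\mathcal{S}\setminus(\mathcal{M}\cup\{i\})$.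 NNA: 1. Start with $\mathcal{M}=(1)$. 2. If there is a unique nearest neighbor $i^*$ with respect to the current $\mathcal{M}$, set $\mathcal{M}\leftarrow\mathcal{M}\cup\{i^*\}$; otherwise the algorithm terminates prematurely. 3. Repeat step 2 until node $D$ has been appended, in which case the algorithm terminates normally and outputs $\mathcal{M}$. *)

From Stdlib Require Import Reals List Arith.
Import ListNotations.
Open Scope R_scope.

(* Nodes are natural numbers 1..D; a route is a list of nodes. *)
Definition in_S (D i : nat) : Prop := (1 <= i <= D)%nat.

Definition is_route (D : nat) (M : list nat) : Prop :=
  NoDup M /\ (forall m, In m M -> in_S D m) /\ head M = Some 1%nat.

Definition is_sd_route (D : nat) (M : list nat) : Prop :=
  is_route D M /\ last M 0%nat = D.

(* total power received by the node at (0-based) position t from the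
   nodes at positions 0..t-1 of M *)
Definition recv_power (P : nat -> nat -> R) (M : list nat) (t : nat) : R :=
  fold_right Rplus 0
    (map (fun i => P (nth i M 0%nat) (nth t M 0%nat)) (seq 0 t)).

(* reception rate of the node at 0-based position t (i.e. m_{t+1}) *)
Definition recv_rate (P : nat -> nat -> R) (N : R) (M : list nat) (t : nat) : R :=
  / 2 * ln (1 + / N * recv_power P M t).

(* minimum of a nonempty list (0 for the empty list, never used) *)
Definition Rmin_list (l : list R) : R :=
  match l with
  | [] => 0
  | r :: rs => fold_left Rmin rs r
  end.

(* DF rate: minimum over the receiving positions 1..L-1 (0-based),
   i.e. t = 2..L in the paper's 1-based indexing. Meaningful for L >= 2. *)
Definition R_DF (P : nat -> nat -> R) (N : R) (M : list nat) : R :=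
  Rmin_list (map (recv_rate P N M) (seq 1 (length M - 1))).

Definition nearest_neighbor (D : nat) (P : nat -> nat -> R) (M : list nat) (i : nat) : Prop :=
  in_S D i /\ ~ In i M /\
  forall m j, In m M -> in_S D j -> ~ In j M -> j <> i -> P m i >= P m j.

(* Routes reachable by running NNA: start from (1); while D has not been
   appended, append the unique nearest neighbor (if it exists). *)
Inductive nna_reaches (D : nat) (P : nat -> nat -> R) : list nat -> Prop :=
  | nna_start : nna_reaches D P [1%nat]
  | nna_step : forall M i,
      nna_reaches D P M ->
      ~ In D M ->
      nearest_neighbor D P M i ->
      (forall j, nearest_neighbor D P M j -> j = i) ->
      nna_reaches D P (M ++ [i]).

Definition nna_output (D : nat) (P : nat -> nat -> R) (M : list nat) : Prop :=
  nna_reaches D P M /\ In D M.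

From Stdlib Require Import Reals List Arith Lia Lra.
Import ListNotations.
Open Scope R_scope.

(* Fix a receiving position t of the NNA output M2, let Q be the prefix of
   its first t nodes and i = m*_{t+1} the node appended after Q.  When i was
   chosen, D was not yet in Q, so the route M1 (which ends at D and starts at
   1, a node of Q) has a first node x = m_{s+1} outside Q, with s >= 1 and all
   earlier nodes of M1 inside Q.  Hence the power received at x along M1 is
   at most sum_{q in Q} P q x (powers are nonnegative), which is at most
   sum_{q in Q} P q i = power received at i along M2, because i is a nearest
   neighbor of Q.  Since the rate is monotone in the received power,
   R_DF(M1) <= R_{m_{s+1}}(M1) <= R_{m*_{t+1}}(M2) for every t, and taking the
   minimum over t gives R_DF(M1) <= R_DF(M2). *)

Definition sumR (l : list R) : R := fold_right Rplus 0 l.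

Lemma sumR_app (l1 l2 : list R) : sumR (l1 ++ l2) = sumR l1 + sumR l2.
Proof. induction l1 as [|a l1 IH]; simpl; [lra|]. unfold sumR in *; rewrite IH; lra. Qed.

Lemma sumR_nonneg (f : nat -> R) (l : list nat) :
  (forall x, In x l -> 0 <= f x) -> 0 <= sumR (map f l).
Proof.
  induction l as [|a l IH]; intros Hf; simpl; [lra|].
  assert (0 <= f a) by (apply Hf; left; auto).
  assert (0 <= sumR (map f l)) by (apply IH; intros; apply Hf; right; auto).
  unfold sumR in *; lra.
Qed.

Lemma sumR_le_pointwise (f g : nat -> R) (l : list nat) :
  (forall x, In x l -> f x <= g x) -> sumR (map f l) <= sumR (map g l).
Proof.
  induction l as [|a l IH]; intros Hfg; simpl; [lra|].
  assert (f a <= g a) by (apply Hfg; left; auto).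
  assert (sumR (map f l) <= sumR (map g l)) by (apply IH; intros; apply Hfg; right; auto).
  unfold sumR in *; lra.
Qed.

Lemma sumR_incl (f : nat -> R) (l1 l2 : list nat) :
  NoDup l1 -> incl l1 l2 -> (forall x, In x l2 -> 0 <= f x) ->
  sumR (map f l1) <= sumR (map f l2).
Proof.
  intros Hnd; revert l2.
  induction Hnd as [|a l1 Ha Hl1 IH]; intros l2 Hincl Hpos.
  - apply sumR_nonneg; auto.
  - destruct (in_split a l2 (Hincl a (or_introl eq_refl))) as [u [v ->]].
    assert (Hrest : sumR (map f l1) <= sumR (map f (u ++ v))).
    { apply IH.
      - intros x Hx. assert (Hx' := Hincl x (or_intror Hx)).
        apply in_app_iff in Hx'; apply in_app_iff.
        destruct Hx' as [?|[->|?]]; tauto.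
      - intros x Hx; apply Hpos; apply in_app_iff in Hx; apply in_app_iff; simpl; tauto. }
    assert (0 <= f a) by (apply Hpos; apply in_app_iff; simpl; auto).
    rewrite map_app, sumR_app in *; simpl; unfold sumR in *; lra.
Qed.

Lemma map_nth_seq (g : nat -> R) (M : list nat) (s : nat) :
  (s <= length M)%nat ->
  map (fun i => g (nth i M 0%nat)) (seq 0 s) = map g (firstn s M).
Proof.
  revert s; induction M as [|a M IH]; intros s Hs.
  - simpl in Hs; replace s with 0%nat by lia; reflexivity.
  - destruct s; [reflexivity|]. simpl; f_equal.
    rewrite <- seq_shift, map_map. apply IH. simpl in Hs; lia.
Qed.

Lemma recv_power_prefix (P : nat -> nat -> R) (M : list nat) (t : nat) :
  (t <= length M)%nat ->
  recv_power P M t = sumR (map (fun m => P m (nth t M 0%nat)) (firstn t M)).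
Proof. intros Ht; unfold recv_power; rewrite (map_nth_seq (fun m => P m (nth t M 0%nat))); auto. Qed.

Lemma fold_Rmin_spec (rs : list R) (r : R) :
  fold_left Rmin rs r <= r /\ forall y, In y rs -> fold_left Rmin rs r <= y.
Proof.
  revert r; induction rs as [|a rs IH]; intros r; simpl.
  - split; [lra | tauto].
  - destruct (IH (Rmin r a)) as [Hr Hrs]. split.
    + eapply Rle_trans; [apply Hr | apply Rmin_l].
    + intros y [<-|Hy]; auto. eapply Rle_trans; [apply Hr | apply Rmin_r].
Qed.

Lemma Rmin_list_le (l : list R) (y : R) : In y l -> Rmin_list l <= y.
Proof.
  destruct l as [|r rs]; simpl; [tauto|].
  destruct (fold_Rmin_spec rs r) as [Hr Hrs].
  intros [<-|Hy]; auto.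
Qed.

Lemma Rmin_list_glb (l : list R) (x : R) :
  l <> [] -> (forall y, In y l -> x <= y) -> x <= Rmin_list l.
Proof.
  destruct l as [|r rs]; simpl; [congruence|]. intros _ Hx.
  revert r Hx; induction rs as [|a rs IH]; intros r Hx; simpl; [auto|].
  apply IH. intros y [<-|Hy]; [apply Rmin_glb|]; auto with datatypes.
Qed.

Lemma R_DF_le_rate (P : nat -> nat -> R) (N : R) (M : list nat) (s : nat) :
  (1 <= s < length M)%nat -> R_DF P N M <= recv_rate P N M s.
Proof. intros Hs; apply Rmin_list_le, in_map, in_seq; lia. Qed.

Lemma R_DF_glb (P : nat -> nat -> R) (N x : R) (M : list nat) :
  (2 <= length M)%nat ->
  (forall t, (1 <= t < length M)%nat -> x <= recv_rate P N M t) -> x <= R_DF P N M.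
Proof.
  intros HL Hx; apply Rmin_list_glb.
  - destruct (length M - 1)%nat eqn:E; [lia | discriminate].
  - intros y Hy; apply in_map_iff in Hy; destruct Hy as [t [<- Ht]].
    apply in_seq in Ht; apply Hx; lia.
Qed.

Lemma rate_monotone (N a b : R) :
  0 < N -> 0 <= a -> a <= b -> / 2 * ln (1 + / N * a) <= / 2 * ln (1 + / N * b).
Proof.
  intros HN Ha Hab.
  assert (HinvN : 0 < / N) by (apply Rinv_0_lt_compat; auto).
  assert (0 <= / N * a) by (apply Rmult_le_pos; lra).
  assert (Hle : / N * a <= / N * b) by (apply Rmult_le_compat_l; lra).
  apply Rmult_le_compat_l; [lra|].
  destruct (Rle_lt_or_eq_dec _ _ Hle) as [Hlt | ->]; [left; apply ln_increasing | ]; lra.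
Qed.

Lemma NoDup_firstn (l : list nat) (n : nat) : NoDup l -> NoDup (firstn n l).
Proof. intros H; rewrite <- (firstn_skipn n l) in H; eapply NoDup_app_remove_r; eauto. Qed.

Lemma In_firstn (l : list nat) (n x : nat) : In x (firstn n l) -> In x l.
Proof. intros H; rewrite <- (firstn_skipn n l); apply in_app_iff; auto. Qed.

Lemma In_last (l : list nat) (d : nat) : l <> [] -> In (last l d) l.
Proof.
  induction l as [|a [|b l] IH]; intros Hne; [congruence | left; auto |].
  right; apply IH; discriminate.
Qed.

Lemma first_outside (Q l : list nat) :
  (exists x, In x l /\ ~ In x Q) ->
  exists s, (s < length l)%nat /\ ~ In (nth s l 0%nat) Q /\ incl (firstn s l) Q.
Proof.
  induction l as [|a l IH]; intros [x [Hx HxQ]]; [destruct Hx|].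
  destruct (in_dec Nat.eq_dec a Q) as [HaQ | HaQ].
  - destruct IH as [s [Hs [HsQ Hpre]]].
    { exists x; split; auto. destruct Hx as [<-|Hx]; tauto. }
    exists (S s); simpl; split; [lia | split; auto]. apply incl_cons; auto.
  - exists 0%nat; simpl; split; [lia | split; auto]. intros y [].
Qed.

Lemma nna_reaches_inv (D : nat) (P : nat -> nat -> R) (M : list nat) :
  (1 <= D)%nat -> nna_reaches D P M ->
  is_route D M /\
  forall t, (1 <= t < length M)%nat ->
    nearest_neighbor D P (firstn t M) (nth t M 0%nat) /\ ~ In D (firstn t M).
Proof.
  intros HD1 HM; induction HM as [|M i HM IH HDM Hnn _].
  - split; [|simpl; lia].
    split; [repeat constructor; auto | split; [|reflexivity]].
    intros m [<-|[]]; unfold in_S; lia.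
  - destruct IH as [[Hnd [HS Hhd]] Hpre].
    assert (HMne : M <> []) by (intros ->; discriminate).
    destruct Hnn as [HiS [HiM Hnear]].
    split; [split; [|split] |].
    + apply NoDup_app; auto; [repeat constructor; auto|].
      intros a Ha [<-|[]]; contradiction.
    + intros m Hm; apply in_app_iff in Hm; destruct Hm as [?|[<-|[]]]; auto.
    + destruct M; [congruence | exact Hhd].
    + intros t Ht; rewrite length_app in Ht; simpl in Ht.
      destruct (Nat.eq_dec t (length M)) as [->|Hne].
      * rewrite nth_middle, <- (Nat.add_0_r (length M)), firstn_app_2, app_nil_r.
        exact (conj (conj HiS (conj HiM Hnear)) HDM).
      * rewrite app_nth1, firstn_app by lia.
        replace (t - length M)%nat with 0%nat by lia.
        rewrite app_nil_r; apply Hpre; lia.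
Qed.

Lemma hop_dominated (D : nat) (P : nat -> nat -> R) (M1 Q : list nat) (i : nat) :
  (forall a b, in_S D a -> in_S D b -> a <> b -> 0 < P a b) ->
  is_sd_route D M1 ->
  (forall q, In q Q -> in_S D q) -> In 1%nat Q -> ~ In D Q ->
  nearest_neighbor D P Q i ->
  exists s, (1 <= s < length M1)%nat /\
    0 <= recv_power P M1 s <= sumR (map (fun q => P q i) Q).
Proof.
  intros HP [[Hnd1 [HS1 Hhd1]] Hlast] HSQ H1Q HDQ [_ [_ Hnear]].
  assert (HM1ne : M1 <> []) by (intros ->; discriminate).
  destruct (first_outside Q M1) as [s [Hs [HxQ Hpre]]].
  { exists D; split; auto. rewrite <- Hlast; apply In_last; auto. }
  set (x := nth s M1 0%nat) in *.
  assert (Hs0 : s <> 0%nat).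
  { intros ->. destruct M1 as [|a M1']; [congruence|]. simpl in Hhd1, HxQ.
    injection Hhd1 as ->; contradiction. }
  assert (HxS : in_S D x) by (apply HS1, nth_In; lia).
  assert (Hpos : forall q, In q Q -> 0 <= P q x).
  { intros q Hq; left; apply HP; auto. intros ->; contradiction. }
  exists s; split; [lia|].
  rewrite recv_power_prefix by lia; fold x; split.
  - apply sumR_nonneg; auto.
  - apply Rle_trans with (sumR (map (fun q => P q x) Q)).
    { apply sumR_incl; auto; apply NoDup_firstn; auto. }
    apply sumR_le_pointwise; intros q Hq.
    destruct (Nat.eq_dec x i) as [<-|Hxi]; [lra|].
    apply Rge_le, Hnear; auto.
Qed.

Theorem lemma4 (D : nat) (P : nat -> nat -> R) (N : R) (M1 M2 : list nat) :
  (2 <= D)%nat ->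
  0 < N ->
  (forall i t, in_S D i -> in_S D t -> i <> t -> 0 < P i t) ->
  nna_output D P M2 ->
  is_sd_route D M1 ->
  R_DF P N M2 >= R_DF P N M1.
Proof.
  intros HD HN HP [HR2 HDM2] HM1.
  destruct (nna_reaches_inv D P M2 ltac:(lia) HR2) as [[_ [HS2 Hhd2]] Hnna].
  assert (HL2 : (2 <= length M2)%nat).
  { destruct M2 as [|a [|b l]]; simpl in *; [discriminate | | lia].
    injection Hhd2 as ->; destruct HDM2 as [?|[]]; lia. }
  apply Rle_ge, R_DF_glb; auto. intros t Ht.
  destruct (Hnna t Ht) as [Hnn HDQ].
  assert (H1Q : In 1%nat (firstn t M2)).
  { destruct M2 as [|a M2']; [discriminate|]. injection Hhd2 as ->.
    destruct t; [lia | left; auto]. }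
  destruct (hop_dominated D P M1 (firstn t M2) (nth t M2 0%nat) HP HM1
              (fun q Hq => HS2 q (In_firstn _ _ _ Hq)) H1Q HDQ Hnn)
    as [s [Hs Hpow]].
  apply Rle_trans with (recv_rate P N M1 s); [apply R_DF_le_rate; auto|].
  rewrite <- !recv_power_prefix in * by lia.
  apply rate_monotone; auto; apply Hpow.
Qed.
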